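(* Let $H=(V,E)$ be an unweighted hypergraph and consider the algorithm Estimation$(H)$: compute a number $k>0$ with $\gamma_H(e)\ge k$ for all $e\in E$; set $H_0=H$ and $i=1$; while $H_{i-1}$ has edges, let $F_i=\textsc{WeakEdges}(H_{i-1},2^ik)$, set $\gamma'(e)=2^{i-1}k$ for every $e\in F_i$, set $H_i=H_{i-1}-F_i$ and increase $i$ by one. Here $\textsc{WeakEdges}(G,t)$ is any procedure returning a set of edges of $G$ that contains all $t$-weak edges of $G$. Then: (1) for each $i$ and each $e\in F_i$, $\gamma_H(e)\ge 2^{i-1}k$; (2) for each $e\in E$ assigned a value $\gamma'(e)$ by the algorithm, $\gamma'(e)\le\gamma_H(e)$.
   Context: A hypergraph $H=(V,E)$ has edges that are subsets of $V$. For $U\subseteq V$, $H[U]=(U,\{e\in E:e\subseteq U\})$; for $A\subseteq V$, $\delta_H(A)$ is the set of edges meeting both $A$ and $V\setminus A$; $\lambda(H)=\min_{\emptyset\subsetneq A\subsetneq V}|\delta_H(A)|$. The strength of $e$ is $\gamma_H(e)=\max_{e\subseteq U\subseteq V}\lambda(H[U])$. An edge is $t$-weak in $G$ if its strength in $G$ is less than $t$. $H-F$ denotes deletion of the edge set $F$. *)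

From HB Require Import structures.
From mathcomp Require Import all_boot all_order all_algebra.
Set Implicit Arguments. Unset Strict Implicit. Unset Printing Implicit Defensive.
Import Order.TTheory GRing.Theory Num.Theory.

(* A hypergraph on vertex type V with edges indexed by a finite type E
   (parallel edges allowed); [ends e : {set V}] is the vertex set of edge e.
   A sub-hypergraph on the same vertex set is given by an edge set S : {set E}.
   Extended naturals are encoded as [option nat], [None] = +infinity
   (the value of a min over an empty range, e.g. lambda of a 1-vertex graph). *)

Definition omin (x y : option nat) : option nat :=
  match x, y with
  | None, _ => y
  | _, None => x
  | Some a, Some b => Some (minn a b)
  end.

Definition omax (x y : option nat) : option nat :=
  match x, y with
  | None, _ => None
  | _, None => None
  | Some a, Some b => Some (maxn a b)
  end.

Section Hyper.
Variables (V E : finType) (ends : E -> {set V}).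

Definition induced_edges (S : {set E}) (U : {set V}) : {set E} :=
  [set f in S | ends f \subset U].

Definition cut (S : {set E}) (U A : {set V}) : {set E} :=
  [set f in induced_edges S U |
     (ends f :&: A != set0) && (ends f :&: (U :\: A) != set0)].

Definition lambda (S : {set E}) (U : {set V}) : option nat :=
  \big[omin/None]_(A : {set V} | (A \subset U) && (A != set0) && (A != U))
     Some #|cut S U A|.

Definition strength (S : {set E}) (e : E) : option nat :=
  \big[omax/Some 0%N]_(U : {set V} | ends e \subset U) lambda S U.
End Hyper.

Definition oge {R : numDomainType} (x : option nat) (c : R) : bool :=
  if x is Some n then (c <= n%:R)%R else true.
Definition olt {R : numDomainType} (x : option nat) (t : R) : bool :=
  if x is Some n then (n%:R < t)%R else false.

From HB Require Import structures.
From mathcomp Require Import all_boot all_order all_algebra.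
Set Implicit Arguments.
Unset Strict Implicit.
Unset Printing Implicit Defensive.
Import Order.TTheory GRing.Theory Num.Theory.
Local Open Scope ring_scope.

(* Adding edges can only enlarge cuts, hence connectivity and strength: the
   strength of an edge in H dominates its strength in any H_i.  An edge still
   present in H_i survived round i, so it was not 2^i k-weak in H_(i-1); by
   induction every edge of H_(i-1), in particular of F_i, has strength at least
   2^(i-1) k in H, which is exactly the value gamma' gives it. *)

Definition ole (x y : option nat) : bool :=
  match x, y with
  | _, None => true
  | None, Some _ => false
  | Some a, Some b => (a <= b)%N
  end.

Lemma ole_omin x1 y1 x2 y2 :
  ole x1 y1 -> ole x2 y2 -> ole (omin x1 x2) (omin y1 y2).
Proof.
case: x1 y1 x2 y2 => [a|] [b|] [c|] [d|] //=.
- by move=> ab cd; rewrite leq_min !geq_min ab cd orbT.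
- by move=> ab _; rewrite geq_min ab.
- by move=> _ cd; rewrite geq_min cd orbT.
Qed.

Lemma ole_omax x1 y1 x2 y2 :
  ole x1 y1 -> ole x2 y2 -> ole (omax x1 x2) (omax y1 y2).
Proof.
case: x1 y1 x2 y2 => [a|] [b|] [c|] [d|] //= ab cd.
by rewrite geq_max !leq_max ab cd orbT.
Qed.

Lemma oge_ole_trans (R : numDomainType) x y (c : R) :
  oge x c -> ole x y -> oge y c.
Proof. by case: x y => [a|] [b|] //= ca ab; rewrite (le_trans ca) ?ler_nat. Qed.

Lemma ogeNolt (R : realDomainType) x (c : R) : oge x c = ~~ olt x c.
Proof. by case: x => [a|] //=; rewrite leNgt. Qed.

Section StrengthMonotone.
Variables (V E : finType) (ends : E -> {set V}).

Lemma cut_subset (S T : {set E}) (U A : {set V}) :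
  S \subset T -> cut ends S U A \subset cut ends T U A.
Proof.
move=> ST; apply/subsetP => f; rewrite !inE => /andP[/andP[fS ->] ->].
by rewrite (subsetP ST _ fS).
Qed.

Lemma lambda_mono (S T : {set E}) (U : {set V}) :
  S \subset T -> ole (lambda ends S U) (lambda ends T U).
Proof.
move=> ST; apply: (big_ind2 (fun x y => ole x y)) => //; first exact: ole_omin.
by move=> A _; apply/subset_leq_card/cut_subset.
Qed.

Lemma strength_mono (S T : {set E}) (e : E) :
  S \subset T -> ole (strength ends S e) (strength ends T e).
Proof.
move=> ST; apply: (big_ind2 (fun x y => ole x y)) => //; first exact: ole_omax.
by move=> U _; apply: lambda_mono.
Qed.

Lemma strength_setD_weak (R : realDomainType) (S T F : {set E}) (t : R) e :
  S \subset T -> {in S, forall f, olt (strength ends S f) t -> f \in F} ->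
  e \in S :\: F -> oge (strength ends T e) t.
Proof.
move=> ST weakF; rewrite inE => /andP[eNF eS].
have strong_e : oge (strength ends S e) t.
  by rewrite ogeNolt; apply: contra eNF; apply: weakF.
exact: oge_ole_trans strong_e (strength_mono e ST).
Qed.

End StrengthMonotone.

Theorem lemma3p1 (R : realFieldType) (V E : finType) (ends : E -> {set V})
  (k : R) (Hs : nat -> {set E}) (F : nat -> {set E}) (gam' : E -> R) :
  0 < k ->
  (forall e : E, oge (strength ends [set: E] e) k) ->
  Hs 0%N = [set: E] ->
  (forall i : nat, (forall j, (j <= i)%N -> Hs j != set0) ->
     [/\ F i.+1 \subset Hs i,
         (forall e, e \in Hs i ->
            olt (strength ends (Hs i) e) (2 ^+ i.+1 * k) -> e \in F i.+1),
         (forall e, e \in F i.+1 -> gam' e = 2 ^+ i * k)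
       & Hs i.+1 = Hs i :\: F i.+1]) ->
  forall i : nat, (forall j, (j <= i)%N -> Hs j != set0) ->
  forall e : E, e \in F i.+1 ->
    oge (strength ends [set: E] e) (2 ^+ i * k) /\
    oge (strength ends [set: E] e) (gam' e).
Proof.
move=> _ strong_k _ step.
have strong_Hs i : (forall j, (j <= i)%N -> Hs j != set0) ->
    {in Hs i, forall e, oge (strength ends [set: E] e) (2 ^+ i * k)}.
  case: i => [_ e _|i nonempty e]; first by rewrite expr0 mul1r; apply: strong_k.
  have [_ weakF _ ->] := step i (fun j ji => nonempty j (leqW ji)).
  exact: strength_setD_weak (subsetT _) weakF.
move=> i nonempty e eF.
have [FHs _ gamF _] := step i nonempty.
have strong_e := strong_Hs i nonempty e (subsetP FHs e eF).
by rewrite gamF.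
Qed.
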